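(* Let $\xi_k=I_k-(\theta(M_k)-\theta(M_{k-1}))$ for $k\ge1$. Then for every $k\ge1$, almost surely, $$E[\xi_k^2\mid\mathcal{F}_{k-1}]=\sum_{i>M_{k-1}}s_i\,(y_{i+\delta}+y_{i+\delta-1}-y_{i-1})\quad\text{if }\delta<0,$$ and $$E[\xi_k^2\mid\mathcal{F}_{k-1}]=y_{M_{k-1}+\delta}\Big(1-2\sum_{i=1}^{\delta}s_{M_{k-1}+i}\Big)+2\sum_{i>M_{k-1}}s_i\Big(y_{i+\delta}+\frac{p_{i+\delta}}{2}\Big)-2y_{M_{k-1}+2\delta}\quad\text{if }\delta>0.$$
   Context: Let $\{X_n,n\ge1\}$ be independent, identically distributed random variables with values in $\mathbb{Z}_+=\{0,1,2,\dots\}$ such that $p_k=P[X_1=k]>0$ for every $k\in\mathbb{Z}_+$ (set $p_m=0$ for integers $m\le -1$). For $k\in\mathbb{Z}_+$ let $y_k=\sum_{i>k}p_i$, and set $y_m=1$ for integers $m\le-1$. Fix an integer $\delta$ and define $s_k=p_{k+\delta}/y_{k-1}$ and $\theta(k)=\sum_{i=0}^k s_i$ for $k\in\mathbb{Z}_+$. Let $M_0=0$ and $M_n=\max\{X_1,\dots,X_n\}$ for $n\ge1$. Let $I_k=\mathbf{1}_{\{X_k>M_{k-1}+\delta\}}$. Let $\mathcal{F}_0=\{\emptyset,\Omega\}$ and $\mathcal{F}_n=\sigma(X_1,\dots,X_n)$ for $n\ge1$. *)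

From HB Require Import structures.
From mathcomp Require Import all_boot all_order all_algebra.
From mathcomp Require Import all_classical all_reals all_analysis.
From mathcomp Require Import measurable_realfun.
Set Implicit Arguments. Unset Strict Implicit. Unset Printing Implicit Defensive.
Import Order.TTheory GRing.Theory Num.Theory.
Local Open Scope classical_set_scope.
Local Open Scope ring_scope.

Section defs.
Context {R : realType}.

Definition pz (p : nat -> R) (m : int) : R :=
  match m with Posz n => p n | Negz _ => 0 end.

Definition yz (p : nat -> R) (m : int) : R :=
  match m with
  | Posz k => \big[+%R/0%R]_(k.+1 <= i <oo) p i
  | Negz _ => 1
  end.

Definition s_ (p : nat -> R) (delta : int) (k : nat) : R :=
  pz p (k%:Z + delta) / yz p (k%:Z - 1).

Definition theta (p : nat -> R) (delta : int) (k : nat) : R :=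
  \sum_(0 <= i < k.+1) s_ p delta i.

Definition Mx {T : Type} (X : nat -> T -> nat) (n : nat) (w : T) : nat :=
  \max_(1 <= i < n.+1) X i w.

Definition Ind {T : Type} (X : nat -> T -> nat) (delta : int) (k : nat) (w : T) : R :=
  if (Mx X k.-1 w)%:Z + delta < (X k w)%:Z then 1 else 0.

Definition xi {T : Type} (X : nat -> T -> nat) (p : nat -> R) (delta : int)
  (k : nat) (w : T) : R :=
  Ind X delta k w - (theta p delta (Mx X k w) - theta p delta (Mx X k.-1 w)).

(* F_n = sigma(X_1, ..., X_n) (Z_+ carries the discrete sigma-algebra);
   for n = 0 this is the trivial sigma-algebra {emptyset, Omega}. *)
Definition filtr {T : Type} (X : nat -> T -> nat) (n : nat) : set (set T) :=
  <<s [set A | exists i (B : set nat), (1 <= i <= n)%N /\ A = X i @^-1` B] >>.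

End defs.

Section condexp.
Context {R : realType} {d : measure_display} {T : measurableType d}.
Local Open Scope ereal_scope.

Definition is_cond_exp (P : probability T R) (G : set (set T)) (Y Z : T -> \bar R) : Prop :=
  (forall B : set (\bar R), measurable B -> G (Z @^-1` B)) /\
  (forall A, G A -> \int[P]_(w in A) Y w = \int[P]_(w in A) Z w).

Definition mutually_independent (P : probability T R) (X : nat -> T -> nat) : Prop :=
  forall (n : nat) (B : nat -> set nat),
    P (\big[setI/setT]_(1 <= i < n.+1) (X i @^-1` B i)) =
    \prod_(1 <= i < n.+1) P (X i @^-1` B i).

End condexp.

From HB Require Import structures.
From mathcomp Require Import all_boot all_order all_algebra.
From mathcomp Require Import all_classical all_reals all_analysis.
From mathcomp Require Import measurable_realfun.
From mathcomp Require Import zify ring lra.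
Import Order.TTheory GRing.Theory Num.Theory.
Local Open Scope classical_set_scope.
Local Open Scope ring_scope.
Import numFieldNormedType.Exports.

(* Conditionally on [F_(k-1)] the maximum [m = M_(k-1)] is frozen and [X_k] is an
   independent copy of [X_1] (a Dynkin argument from the product rule on cylinders), so
   [E[xi_k^2 | F_(k-1)] = g(M_(k-1))] with [g(m) = sum_j p_j (I_j - D_j)^2], where
   [I_j = 1(j > m + delta)] and [D_j = theta(max(m, j)) - theta(m) = sum_(m < i <= j) s_i].
   As [I_j^2 = I_j], [g(m) + 2 E[I D] = E[I] + E[D^2]].  Exchanging the order of summation
   (all terms are nonnegative) and using [sum_(j >= i) p_j = y_(i-1)] and
   [s_i y_(i-1) = p_(i+delta)] gives [E[I] = y_(m+delta)],
   [E[I D] = sum_(i > m) s_i y_(max(i-1, m+delta))] and, from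
   [D_j^2 = sum_(m < i <= j) s_i (2 D_(i-1) + s_i)],
   [E[D^2] = sum_(i > m) s_i (p_(i+delta) + 2 y_(i+delta))].  The sign of [delta] decides
   which branch of the maximum is taken. *)

Section nneseries_facts.
Context {R : realType}.
Local Open Scope ereal_scope.

Lemma nneseries_delta (a : nat) (x : \bar R) : 0 <= x ->
  \sum_(i <oo) (if i == a then x else 0) = x.
Proof.
move=> x0.
rewrite (@nneseriesD1 _ _ a xpredT) ?eqxx //; last by move=> i _; case: ifP.
by rewrite eseries0 ?adde0 // => i _ /andP[_ /negbTE ->].
Qed.

Lemma nneseries_prefix (N : nat) (f : nat -> \bar R) : (forall i, 0 <= f i) ->
  \sum_(i <oo) (if (i < N)%N then f i else 0) = \sum_(0 <= i < N) f i.
Proof.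
move=> f0.
rewrite (nneseries_split 0 N); last by move=> i _; case: ifP.
rewrite add0n eseries0 ?adde0; last by move=> i Ni _; rewrite ltnNge Ni.
by apply: eq_big_nat => i /andP[_ ->].
Qed.

Lemma nneseries_partial_sum_swap (f : nat -> nat) (w c : nat -> R) :
  (forall j, (0 <= w j)%R) -> (forall i, (0 <= c i)%R) ->
  \sum_(j <oo) (w j * \sum_(0 <= i < f j) c i)%:E =
  \sum_(i <oo) (c i)%:E * \sum_(j <oo) (if (i < f j)%N then w j else 0%R)%:E.
Proof.
move=> w_ge0 c_ge0.
transitivity (\sum_(j <oo) \sum_(i <oo) (if (i < f j)%N then c i * w j else 0%R)%:E).
  apply: eq_eseriesr => j _; rewrite EFinM -sumEFin -nneseries_prefix; last first.
    by move=> i; rewrite lee_fin.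
  rewrite -nneseriesZl; last by move=> i _; case: ifP; rewrite // lee_fin.
  by apply: eq_eseriesr => i _; case: ifP => _; rewrite ?mule0 // -EFinM mulrC.
rewrite nneseries_interchange; last first.
  by move=> j i; case: ifP => _; rewrite // lee_fin mulr_ge0.
apply: eq_eseriesr => i _; rewrite -nneseriesZl; last first.
  by move=> j _; case: ifP; rewrite // lee_fin.
by apply: eq_eseriesr => j _; case: ifP => _; rewrite ?mule0 // EFinM.
Qed.

Lemma addeIr_EFin (c : R) (x y : \bar R) : x + c%:E = y + c%:E -> x = y.
Proof. by move=> xy; rewrite -[LHS](addeK (x := c%:E)) // xy addeK. Qed.

End nneseries_facts.

Section tail_sums.
Context {R : realType} (p : nat -> R).
Hypothesis p_gt0 : forall k, 0 < p k.
Hypothesis p_sum1 : (\sum_(j <oo) (p j)%:E = 1)%E.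

Lemma pz_ge0 t : 0 <= pz p t.
Proof. by case: t => [t|t] //=; exact/ltW. Qed.

Lemma pz_series t :
  (pz p t)%:E = (\sum_(j <oo) (if j%:Z == t then p j else 0)%:E)%E.
Proof.
case: t => [t|t] /=.
- transitivity (\sum_(j <oo) (if j == t then (p t)%:E else 0))%E.
    by rewrite nneseries_delta // lee_fin ltW.
  by apply: eq_eseriesr => j _; rewrite eqz_nat; case: eqP => [->|].
- by rewrite eseries0 // => j _ _; case: ifP => //; rewrite NegzE; lia.
Qed.

Lemma yz_series t :
  (yz p t)%:E = (\sum_(j <oo) (if t < j%:Z then p j else 0)%:E)%E.
Proof.
case: t => [t|t] /=; last by rewrite -p_sum1; apply: congr_lim; apply/funext.
pose q i := if (t < i)%N then p i else 0.
have q_ge0 i : 0 <= q i by rewrite /q; case: ifP => // _; exact/ltW.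
have seriesE : (fun n => \sum_(t.+1 <= i < n) p i) = series q.
  apply/funext => n; rewrite /series /= (big_nat_widenl _ 0) //.
  by rewrite big_mkcond.
have cvg_q : cvgn (series q).
  apply: nnseries_is_cvg => //; apply: (@le_lt_trans _ _ 1%E); last by rewrite ltry.
  rewrite -p_sum1; apply: lee_nneseries => [i _ _|i _]; first by rewrite lee_fin.
  by rewrite lee_fin /q; case: ifP => // _; exact/ltW.
have cvg_tail : cvgn (fun n => \sum_(t.+1 <= i < n) p i) by rewrite seriesE.
rewrite -EFin_lim //.
apply: congr_lim; apply/funext => n /=.
rewrite sumEFin; congr (_%:E); rewrite (big_nat_widenl _ 0) // big_mkcond /=.
by apply: eq_bigr => i _; rewrite ltz_nat.
Qed.

Lemma yz_pred t : yz p (t - 1) = yz p t + pz p t.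
Proof.
apply: EFin_inj; rewrite EFinD !yz_series pz_series -nneseriesD; last 2 first.
- by move=> j _ _; case: ifP => _ //; rewrite lee_fin ltW.
- by move=> j _ _; case: ifP => _ //; rewrite lee_fin ltW.
apply: eq_eseriesr => j _; rewrite -EFinD; congr (_%:E).
have [h1|h1] := boolP (t < j%:Z); have [h2|h2] := boolP (j%:Z == t);
  have [h3|h3] := boolP (t - 1 < j%:Z); rewrite ?addr0 ?add0r //; lia.
Qed.

Lemma yz_ge0 t : 0 <= yz p t.
Proof.
rewrite -lee_fin yz_series; apply: nneseries_ge0 => j _ _.
by case: ifP => _ //; rewrite lee_fin ltW.
Qed.

Lemma yz_gt0 t : 0 < yz p t.
Proof.
case: t => [t|t]; last exact: ltr01.
have := yz_pred t.+1; rewrite (_ : t.+1%:Z - 1 = t); last by lia.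
have : 0 < pz p t.+1 by exact: p_gt0.
by have := yz_ge0 t.+1; lra.
Qed.

Lemma le_yz t t' : t <= t' -> yz p t' <= yz p t.
Proof.
move=> le_tt'; rewrite -lee_fin !yz_series; apply: lee_nneseries.
- by move=> j _ _; case: ifP => _ //; rewrite lee_fin ltW.
- move=> j _; rewrite lee_fin; have [h1|h1] := boolP (t' < j%:Z);
    have [h2|h2] := boolP (t < j%:Z) => //; [lia | exact: ltW].
Qed.

Lemma yz_pred_series (i : nat) :
  (yz p (i%:Z - 1))%:E = (\sum_(j <oo) (if (i < j.+1)%N then p j else 0)%:E)%E.
Proof.
rewrite yz_series; apply: eq_eseriesr => j _.
by have [h1|h1] := boolP (i%:Z - 1 < j%:Z); have [h2|h2] := boolP (i < j.+1)%N => //; lia.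
Qed.

Lemma s_ge0 delta i : 0 <= s_ p delta i.
Proof. by rewrite divr_ge0 ?pz_ge0 // ltW // yz_gt0. Qed.

Lemma s_mul_yz delta i : s_ p delta i * yz p (i%:Z - 1) = pz p (i%:Z + delta).
Proof. by rewrite /s_ divfK // gt_eqF // yz_gt0. Qed.

Lemma yz_shift_series (m : nat) (c : int) : (yz p (m%:Z + c))%:E =
  (\sum_(i <oo) (if (m < i)%N then pz p (i%:Z + c) else 0)%:E)%E.
Proof.
transitivity (\sum_(i <oo) \sum_(j <oo)
   (if (m < i)%N && (j%:Z == i%:Z + c) then p j else 0)%:E)%E; last first.
  apply: eq_eseriesr => i _; case: ifP => mi /=; first by rewrite pz_series.
  by rewrite eseries0.
rewrite nneseries_interchange; last by move=> i j; case: ifP => _ //; rewrite lee_fin ltW.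
rewrite yz_series; apply: eq_eseriesr => j _; symmetry.
have [jc_ge0|jc_lt0] := boolP (0 <= j%:Z - c); last first.
  rewrite eseries0; last first.
    move=> i _ _; have [h|h] := boolP (j%:Z == i%:Z + c); last by rewrite andbF.
    lia.
  by case: ifP => //; lia.
pose i0 := `|j%:Z - c|%N.
have i0E : i0%:Z = j%:Z - c by rewrite /i0; lia.
transitivity (\sum_(i <oo)
    (if i == i0 then (if m%:Z + c < j%:Z then p j else 0)%:E else 0))%E; last first.
  by rewrite nneseries_delta // lee_fin; case: ifP => _ //; exact: ltW.
apply: eq_eseriesr => i _; have [->|ne] := eqVneq i i0.
- have [h1|h1] := boolP (m%:Z + c < j%:Z); have [h2|h2] := boolP (m < i0)%N;
    have [h3|h3] := boolP (j%:Z == i0%:Z + c) => //=; lia.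
- have [h2|h2] := boolP (m < i)%N; have [h3|h3] := boolP (j%:Z == i%:Z + c) => //=; lia.
Qed.

Section one_step.
Variables (delta : int) (m : nat).
Local Notation s := (s_ p delta).

Definition dtheta (n : nat) : R := \sum_(0 <= i < n) (if (m < i)%N then s i else 0).
Definition ind (j : nat) : R := if m%:Z + delta < j%:Z then 1 else 0.
Definition sq_err (j : nat) : R := (ind j - dtheta j.+1) ^+ 2.

Lemma ind_ge0 j : 0 <= ind j.
Proof. by rewrite /ind; case: ifP. Qed.

Lemma dtheta_ge0 n : 0 <= dtheta n.
Proof. by apply: sumr_ge0 => i _; case: ifP => _ //; exact: s_ge0. Qed.

Lemma dtheta_S n : dtheta n.+1 = dtheta n + (if (m < n)%N then s n else 0).
Proof. by rewrite /dtheta big_nat_recr. Qed.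

Lemma theta_maxnB j : theta p delta (maxn m j) - theta p delta m = dtheta j.+1.
Proof.
have [le_jm|lt_mj] := leqP j m.
  rewrite subrr /dtheta big_nat_cond big1 // => i /andP[/andP[_ lt_ij] _].
  by case: ifP => // lt_mi; lia.
rewrite /theta /dtheta (@big_cat_nat _ _ _ m.+1 0 j.+1) //=; last by lia.
rewrite addrC addrK (@big_cat_nat _ _ _ m.+1 0 j.+1) //=; last by lia.
rewrite [X in _ = X + _]big1_seq ?add0r; last first.
  by move=> i; rewrite mem_index_iota => /andP[_ lt_im]; case: ifP => // lt_mi; lia.
by apply: eq_big_nat => i /andP[lt_mi _]; rewrite lt_mi.
Qed.

Lemma dtheta_sqr n : dtheta n ^+ 2 =
  \sum_(0 <= i < n) (if (m < i)%N then s i * (2 * dtheta i + s i) else 0).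
Proof.
elim: n => [|n IH]; first by rewrite /dtheta !big_geq // expr0n.
by rewrite big_nat_recr //= -IH dtheta_S; case: ifP => _; [ring | rewrite !addr0].
Qed.

Lemma series_p_ind : (\sum_(j <oo) (p j * ind j)%:E)%E = (yz p (m%:Z + delta))%:E.
Proof.
rewrite yz_series; apply: eq_eseriesr => j _.
by rewrite /ind; case: ifP => _; rewrite ?mulr1 ?mulr0.
Qed.

Lemma series_p_ind_dtheta :
  (\sum_(j <oo) (p j * ind j * dtheta j.+1)%:E)%E =
  (\sum_(i <oo) (if (m < i)%N then s i *
     yz p (if i%:Z - 1 < m%:Z + delta then m%:Z + delta else i%:Z - 1) else 0)%:E)%E.
Proof.
rewrite /dtheta (nneseries_partial_sum_swap S (fun j => p j * ind j)
  (fun i => if (m < i)%N then s i else 0)); last 2 first.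
- by move=> j; apply: mulr_ge0; [exact/ltW | exact: ind_ge0].
- by move=> i; case: ifP => _ //; exact: s_ge0.
apply: eq_eseriesr => i _; case: ifP => lt_mi; last by rewrite mul0e.
rewrite [RHS]EFinM yz_series; congr (_ * _)%E; apply: eq_eseriesr => j _; rewrite /ind.
have [h1|h1] := boolP (i%:Z - 1 < m%:Z + delta); have [h2|h2] := boolP (i < j.+1)%N;
  have [h3|h3] := boolP (m%:Z + delta < j%:Z); have [h4|h4] := boolP (i%:Z - 1 < j%:Z);
  rewrite ?mulr1 ?mulr0 //; exfalso; lia.
Qed.

Lemma series_p_ind_dtheta_neg : delta < 0 ->
  (\sum_(j <oo) (p j * ind j * dtheta j.+1)%:E)%E = (yz p (m%:Z + delta))%:E.
Proof.
move=> delta_lt0; rewrite series_p_ind_dtheta yz_shift_series.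
apply: eq_eseriesr => i _; case: ifP => lt_mi //.
by rewrite ifN ?s_mul_yz //; lia.
Qed.

Lemma series_p_ind_dtheta_pos : 0 < delta ->
  (\sum_(j <oo) (p j * ind j * dtheta j.+1)%:E)%E =
  (yz p (m%:Z + delta) * \sum_(1 <= i < `|delta|%N.+1) s (m + i)
    + yz p (m%:Z + 2 * delta))%:E.
Proof.
move=> delta_gt0; set dn := `|delta|%N.
have deltaE : delta = dn%:Z by rewrite /dn; lia.
rewrite series_p_ind_dtheta.
transitivity (\sum_(i <oo) ((if (m < i)%N && (i < (m + dn).+1)%N
      then s i * yz p (m%:Z + delta) else 0)%:E
    + (if (m + dn < i)%N then pz p (i%:Z + delta) else 0)%:E))%E.
  apply: eq_eseriesr => i _; rewrite -EFinD; congr (_%:E).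
  have [h1|h1] := boolP (i%:Z - 1 < m%:Z + delta); have [h2|h2] := boolP (m + dn < i)%N;
    have [h3|h3] := boolP (i < (m + dn).+1)%N; have [h4|h4] := boolP (m < i)%N;
    rewrite /= ?addr0 ?add0r ?s_mul_yz //; exfalso; lia.
rewrite nneseriesD; last 2 first.
- move=> i _ _; rewrite lee_fin; case: ifP => _ //.
  by apply: mulr_ge0; [exact: s_ge0 | exact: yz_ge0].
- by move=> i _ _; rewrite lee_fin; case: ifP => _ //; exact: pz_ge0.
rewrite EFinD; congr (_ + _)%E; last first.
  have -> : m%:Z + 2 * delta = (m + dn)%N%:Z + delta by lia.
  by rewrite yz_shift_series.
transitivity (\sum_(i <oo) (if (i < (m + dn).+1)%N then
    (if (m < i)%N then s i * yz p (m%:Z + delta) else 0)%:E else 0))%E.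
  apply: eq_eseriesr => i _.
  by have [] := boolP (m < i)%N; have [] := boolP (i < (m + dn).+1)%N.
rewrite nneseries_prefix; last first.
  move=> i; rewrite lee_fin; case: ifP => _ //.
  by apply: mulr_ge0; [exact: s_ge0 | exact: yz_ge0].
rewrite sumEFin mulr_sumr; congr (_%:E).
rewrite (@big_cat_nat _ _ _ m.+1) //=; last by lia.
rewrite big1_seq ?add0r; last first.
  by move=> i; rewrite mem_index_iota => /andP[_ lt_im]; case: ifP => //; lia.
rewrite -(add1n m) big_addn (_ : (m + dn).+1 - m = dn.+1)%N; last by lia.
apply: eq_big_nat => i /andP[le1i _]; rewrite ifT; last by lia.
by rewrite addnC mulrC.
Qed.

Lemma series_pz_dtheta :
  (\sum_(i <oo) (if (m < i)%N then pz p (i%:Z + delta) * dtheta i else 0)%:E)%E =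
  (\sum_(l <oo) (if (m < l)%N then s l * yz p (l%:Z + delta) else 0)%:E)%E.
Proof.
pose a i := if (m < i)%N then pz p (i%:Z + delta) else 0.
pose c l := if (m < l)%N then s l else 0.
transitivity (\sum_(i <oo) (a i * \sum_(0 <= l < id i) c l)%:E)%E.
  by apply: eq_eseriesr => i _; rewrite /a; case: ifP => _; rewrite ?mul0r.
rewrite nneseries_partial_sum_swap; last 2 first.
- by move=> i; rewrite /a; case: ifP => _ //; exact: pz_ge0.
- by move=> l; rewrite /c; case: ifP => _ //; exact: s_ge0.
apply: eq_eseriesr => l _; rewrite /c; case: ifP => lt_ml; last by rewrite mul0e.
rewrite [RHS]EFinM yz_shift_series; congr (_ * _)%E; apply: eq_eseriesr => i _; rewrite /a.
by have [h1|h1] := boolP (l < i)%N; have [h2|h2] := boolP (m < i)%N => //; exfalso; lia.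
Qed.

Lemma series_p_dtheta_sqr : (\sum_(j <oo) (p j * dtheta j.+1 ^+ 2)%:E)%E =
  (\sum_(i <oo) (if (m < i)%N then
     s i * (pz p (i%:Z + delta) + 2 * yz p (i%:Z + delta)) else 0)%:E)%E.
Proof.
pose c i := if (m < i)%N then s i * (2 * dtheta i + s i) else 0.
have c_ge0 i : 0 <= c i.
  rewrite /c; case: ifP => // _; apply: mulr_ge0; first exact: s_ge0.
  by rewrite addr_ge0 ?s_ge0 // mulr_ge0 // dtheta_ge0.
transitivity (\sum_(j <oo) (p j * \sum_(0 <= i < j.+1) c i)%:E)%E.
  by apply: eq_eseriesr => j _; rewrite dtheta_sqr.
rewrite nneseries_partial_sum_swap //; last by move=> j; exact/ltW.
transitivity (\sum_(i <oo) ((if (m < i)%N then pz p (i%:Z + delta) * s i else 0)%:E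
    + 2%:E * (if (m < i)%N then pz p (i%:Z + delta) * dtheta i else 0)%:E))%E.
  apply: eq_eseriesr => i _; rewrite -yz_pred_series -!EFinM -EFinD /c.
  case: ifP => _; last by rewrite !mul0r mulr0 addr0.
  by rewrite mulrAC s_mul_yz; congr (_%:E); ring.
have pzs_ge0 i : (0 <= (if (m < i)%N then pz p (i%:Z + delta) * s i else 0)%:E)%E.
  by rewrite lee_fin; case: ifP => _ //; rewrite mulr_ge0 ?pz_ge0 ?s_ge0.
have sy_ge0 i : (0 <= (if (m < i)%N then s i * yz p (i%:Z + delta) else 0)%:E)%E.
  by rewrite lee_fin; case: ifP => _ //; rewrite mulr_ge0 ?s_ge0 ?yz_ge0.
rewrite nneseriesD; last 2 first.
- by move=> i _ _; exact: pzs_ge0.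
- move=> i _ _; rewrite mule_ge0 // lee_fin; case: ifP => _ //.
  by rewrite mulr_ge0 ?pz_ge0 ?dtheta_ge0.
rewrite nneseriesZl; last first.
  by move=> i _; rewrite lee_fin; case: ifP => _ //; rewrite mulr_ge0 ?pz_ge0 ?dtheta_ge0.
rewrite series_pz_dtheta -nneseriesZl; last by move=> i _; exact: sy_ge0.
rewrite -nneseriesD; last 2 first.
- by move=> i _ _; exact: pzs_ge0.
- by move=> i _ _; rewrite mule_ge0.
apply: eq_eseriesr => i _; rewrite -EFinM -EFinD; case: ifP => _.
  by congr (_%:E); ring.
by rewrite mulr0 addr0.
Qed.

(* Stated without subtraction because the series live in [\bar R]. *)
Lemma series_sq_err_expand : (\sum_(j <oo) (p j * sq_err j)%:E
    + 2%:E * \sum_(j <oo) (p j * ind j * dtheta j.+1)%:E =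
  \sum_(j <oo) (p j * ind j)%:E + \sum_(j <oo) (p j * dtheta j.+1 ^+ 2)%:E)%E.
Proof.
have pI_ge0 j : 0 <= p j * ind j by apply: mulr_ge0; [exact/ltW | exact: ind_ge0].
rewrite -nneseriesZl; last by move=> j _; rewrite lee_fin mulr_ge0 // dtheta_ge0.
rewrite -!nneseriesD; last 4 first.
- by move=> j _ _; rewrite lee_fin.
- by move=> j _ _; rewrite lee_fin mulr_ge0 // ?sqr_ge0 // ltW.
- by move=> j _ _; rewrite lee_fin mulr_ge0 // ?sqr_ge0 // ltW.
- by move=> j _ _; rewrite mule_ge0 // lee_fin mulr_ge0 // dtheta_ge0.
apply: eq_eseriesr => j _; rewrite -!EFinM -!EFinD; congr (_%:E).
by rewrite /sq_err /ind; case: ifP => _; ring.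
Qed.

Lemma series_sq_err_neg : delta < 0 ->
  (\sum_(j <oo) (p j * sq_err j)%:E)%E =
  (\sum_(m.+1 <= i <oo) (s i * (yz p (i%:Z + delta) + yz p (i%:Z + delta - 1)
                                 - yz p (i%:Z - 1)))%:E)%E.
Proof.
move=> delta_lt0; have := series_sq_err_expand.
rewrite series_p_ind series_p_ind_dtheta_neg // series_p_dtheta_sqr.
set a := yz p (m%:Z + delta); set g := (\sum_(m.+1 <= i <oo) _)%E.
have <- : (g + a%:E = \sum_(i <oo) (if (m < i)%N then s i *
      (pz p (i%:Z + delta) + 2 * yz p (i%:Z + delta)) else 0)%:E)%E.
  rewrite /g /a yz_shift_series ereal_series eseries_mkcond -nneseriesD; last 2 first.
  - move=> i _ _; case: ifP => _ //; rewrite lee_fin mulr_ge0 ?s_ge0 //.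
    have := yz_ge0 (i%:Z + delta).
    have : yz p (i%:Z - 1) <= yz p (i%:Z + delta - 1) by apply: le_yz; lia.
    lra.
  - by move=> i _ _; case: ifP => _ //; rewrite lee_fin pz_ge0.
  apply: eq_eseriesr => i _; case: ifP => _; last by rewrite adde0.
  by rewrite -EFinD yz_pred -(s_mul_yz delta i); congr (_%:E); ring.
rewrite -EFinM addeCA -EFinD (_ : a + a = 2 * a); last by ring.
exact: addeIr_EFin.
Qed.

Lemma series_sq_err_pos : 0 < delta ->
  (\sum_(j <oo) (p j * sq_err j)%:E)%E =
  ((yz p (m%:Z + delta) * (1 - 2 * \sum_(1 <= i < `|delta|%N.+1) s (m + i)))%:E
    + 2%:E * (\sum_(m.+1 <= i <oo)
        (s i * (yz p (i%:Z + delta) + pz p (i%:Z + delta) / 2))%:E)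
    - (2 * yz p (m%:Z + 2 * delta))%:E)%E.
Proof.
move=> delta_gt0; have := series_sq_err_expand.
rewrite series_p_ind series_p_ind_dtheta_pos // series_p_dtheta_sqr.
set B := (\sum_(m.+1 <= i <oo) _)%E.
have -> : (\sum_(i <oo) (if (m < i)%N then s i *
      (pz p (i%:Z + delta) + 2 * yz p (i%:Z + delta)) else 0)%:E = 2%:E * B)%E.
  rewrite /B [in RHS]ereal_series eseries_mkcond -nneseriesZl; last first.
    move=> i _; case: ifP => _ //; rewrite lee_fin mulr_ge0 ?s_ge0 //.
    by rewrite addr_ge0 ?yz_ge0 // divr_ge0 ?pz_ge0.
  apply: eq_eseriesr => i _; case: ifP => _; last by rewrite mule0.
  by rewrite -EFinM; congr (_%:E); field.
rewrite -EFinM; set c := 2 * _ => expand; apply: (@addeIr_EFin _ c).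
rewrite expand (addeAC _ (2 * B)%E) -EFinB (addeAC _ (2 * B)%E) -EFinD.
congr (_ + _)%E; congr (_%:E).
by rewrite /c; ring.
Qed.

End one_step.

End tail_sums.

Section integral_partition.
Context {R : realType} {d : measure_display} {T : measurableType d}.
Variable mu : {measure set T -> \bar R}.
Local Open Scope ereal_scope.

Lemma ge0_integral_partition_nat (Y : T -> nat) (A : set T) (h : T -> \bar R) :
  (forall k, measurable (Y @^-1` [set k])) -> measurable A ->
  measurable_fun A h -> (forall w, 0 <= h w) ->
  \int[mu]_(w in A) h w = \sum_(k <oo) \int[mu]_(w in A `&` Y @^-1` [set k]) h w.
Proof.
move=> mY mA mh h_ge0.
have AE : A = \bigcup_k (A `&` Y @^-1` [set k]).
  by apply/seteqP; split => [w Aw | w [k _ []]] //; exists (Y w).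
rewrite [in LHS]AE ge0_integral_bigcup //.
- by move=> k; exact: measurableI.
- by rewrite -AE.
- by move=> k l _ _ [w [[_ <-] [_ <-]]].
Qed.

End integral_partition.

Section filtration.
Context {R : realType} {d : measure_display} {T : measurableType d}.
Variables (P : probability T R) (X : nat -> T -> nat) (p : nat -> R).
Hypothesis X_measurable : forall n k, measurable (X n @^-1` [set k]).
Hypothesis X_indep : mutually_independent P X.
Hypothesis X_law : forall n k, (1 <= n)%N -> P (X n @^-1` [set k]) = (p k)%:E.

Lemma measurable_preimage_X i (B : set nat) : measurable (X i @^-1` B).
Proof.
rewrite (_ : X i @^-1` B = \bigcup_(c in B) X i @^-1` [set c]).
  exact: bigcup_measurable.
by apply/seteqP; split => [w Bw | w [c Bc /= ->]] //=; exists (X i w).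
Qed.

Lemma series_p_eq1 : (\sum_(j <oo) (p j)%:E)%E = 1%E.
Proof.
rewrite -(probability_setT P).
have -> : [set: T] = \bigcup_(j in [set: nat]) X 1 @^-1` [set j].
  by apply/seteqP; split => // w _; exists (X 1 w).
rewrite measure_bigcup //=; last by move=> i j _ _ [w [/= <- <-]].
apply: congr_lim; apply/funext => m /=.
by apply: eq_big => [i|i _]; [rewrite in_setT | rewrite X_law].
Qed.

Lemma p_ge0 j : 0 <= p j.
Proof. by rewrite -lee_fin -(X_law 1 j isT) measure_ge0. Qed.

Lemma probability_fineE A : measurable A -> P A = (fine (P A))%:E.
Proof. by move=> mA; rewrite fineK // fin_num_measure. Qed.

Lemma Mx0 w : Mx X 0 w = 0%N.
Proof. by rewrite /Mx big_geq. Qed.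

Lemma MxS j w : Mx X j.+1 w = maxn (Mx X j w) (X j.+1 w).
Proof. by rewrite /Mx big_nat_recr. Qed.

Variable n : nat.

(* [filtr X n] is the sigma-algebra generated by [gen]; seeing it as the measurable sets of
   [g_sigma_algebraType gen] gives access to the closure lemmas on measurable sets. *)
Let gen := [set A : set T | exists i (B : set nat), (1 <= i <= n)%N /\ A = X i @^-1` B].
Local Notation Fn := (g_sigma_algebraType gen).

Let filtrE A : filtr X n A = measurable (A : set Fn).
Proof. by []. Qed.

Lemma filtr_measurable {A} : filtr X n A -> measurable A.
Proof.
apply: (smallest_sub (sigma_algebra_measurable T)).
by move=> _ [i [B [_ ->]]]; exact: measurable_preimage_X.
Qed.

Lemma filtr_Mx_le j c : (j <= n)%N -> filtr X n [set w | (Mx X j w <= c)%N].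
Proof.
rewrite filtrE; elim: j => [|j IH] le_jn.
  rewrite (_ : [set w | _] = setT); first exact: measurableT.
  by apply/seteqP; split => // w _ /=; rewrite Mx0.
rewrite (_ : [set w | _] = [set w | (Mx X j w <= c)%N] `&` X j.+1 @^-1` [set x | (x <= c)%N]).
  apply: measurableI; first by apply: IH; lia.
  by apply: sub_sigma_algebra; exists j.+1, [set x | (x <= c)%N]; split => //; lia.
by apply/seteqP; split => w /=; rewrite MxS geq_max => /andP.
Qed.

Lemma filtr_Mx_eq c : filtr X n [set w | Mx X n w = c].
Proof.
rewrite filtrE; case: c => [|c].
  rewrite (_ : [set w | _] = [set w | (Mx X n w <= 0)%N]); first exact: filtr_Mx_le.
  by apply/seteqP; split => w /=; rewrite leqn0 => /eqP.
rewrite (_ : [set w | _] = [set w | (Mx X n w <= c.+1)%N] `\` [set w | (Mx X n w <= c)%N]).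
  by apply: measurableD; exact: filtr_Mx_le.
by apply/seteqP; split => w /=; [move=> ->; split => //; lia | move=> [? ?]; lia].
Qed.

Lemma filtr_Mx_preimage (C : set nat) : filtr X n [set w | C (Mx X n w)].
Proof.
rewrite filtrE (_ : [set w | _] = \bigcup_(c in C) [set w | Mx X n w = c]).
  by apply: bigcup_measurable => c _; exact: filtr_Mx_eq.
by apply/seteqP; split => [w Cw | w [c Cc /= ->]] //; exists (Mx X n w).
Qed.

Lemma filtrI {A B} : filtr X n A -> filtr X n B -> filtr X n (A `&` B).
Proof. by rewrite !filtrE; exact: measurableI. Qed.

Lemma measurable_fun_Mx_next (g : nat -> nat -> \bar R) :
  measurable_fun setT (fun w => g (Mx X n w) (X n.+1 w)).
Proof.
move=> _ B mB; rewrite setTI (_ : _ @^-1` B = \bigcup_(a in setT)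
    ([set w | Mx X n w = a] `&` X n.+1 @^-1` [set b | B (g a b)])).
  apply: bigcup_measurable => a _; apply: measurableI; last exact: measurable_preimage_X.
  by apply: filtr_measurable; exact: filtr_Mx_eq.
by apply/seteqP; split => [w Bw | w [a _ [/= -> h]]] //; exists (Mx X n w).
Qed.

Definition cylinder : set (set T) :=
  [set A | exists B : nat -> set nat, A = \big[setI/setT]_(1 <= i < n.+1) X i @^-1` B i].

Definition indep_next : set (set T) := [set A | measurable A /\
  forall j, P (A `&` X n.+1 @^-1` [set j]) = (P A * (p j)%:E)%E].

Lemma cylinder_setI_closed : setI_closed cylinder.
Proof.
move=> _ _ [B1 ->] [B2 ->]; exists (fun i => B1 i `&` B2 i).
by rewrite -big_split; apply: eq_bigr => i _; rewrite preimage_setI.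
Qed.

Lemma gen_sub_cylinder : gen `<=` cylinder.
Proof.
move=> _ [i [B [/andP[i_ge1 i_le] ->]]]; exists (fun l => if l == i then B else setT).
rewrite (bigD1_seq i) ?mem_index_iota ?iota_uniq //=; last by lia.
by rewrite eqxx big1 ?setIT // => l /negbTE ->; rewrite preimage_setT.
Qed.

Lemma cylinder_sub_indep_next : cylinder `<=` indep_next.
Proof.
move=> _ [B ->]; split.
  by apply: bigsetI_measurable => i _; exact: measurable_preimage_X.
move=> j; pose B' i := if i == n.+1 then [set j] else B i.
have B'_lt i : (i < n.+1)%N -> B' i = B i by move=> lt_in; rewrite /B' (ltn_eqF lt_in).
have -> : \big[setI/setT]_(1 <= i < n.+1) X i @^-1` B i `&` X n.+1 @^-1` [set j] =
    \big[setI/setT]_(1 <= i < n.+2) X i @^-1` B' i.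
  rewrite [RHS]big_nat_recr //= {2}/B' eqxx; congr (_ `&` _).
  by apply: eq_big_nat => i /andP[_ lt_in]; rewrite B'_lt.
rewrite !X_indep big_nat_recr //= {2}/B' eqxx X_law //; congr (_ * _)%E.
by apply: eq_big_nat => i /andP[_ lt_in]; rewrite B'_lt.
Qed.

Lemma indep_next_setC A : indep_next A -> indep_next (~` A).
Proof.
move=> [mA indA]; split; first exact: measurableC.
move=> j; set E := X n.+1 @^-1` [set j].
have mE : measurable E := measurable_preimage_X _ _.
have mAE := measurableI _ _ mA mE; have mCAE := measurableI _ _ (measurableC mA) mE.
have splitE : P E = (P (A `&` E) + P (~` A `&` E))%E.
  rewrite -measureU //; first by rewrite -setIUl setUCr setTI.
  by rewrite setIACA setICr set0I.
move: (indA j) splitE; rewrite probability_setC // /E X_law // -/E.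
rewrite (probability_fineE _ mA) (probability_fineE _ mAE) (probability_fineE _ mCAE).
have -> : (1 - (fine (P A))%:E = (1 - fine (P A))%:E)%E by [].
rewrite -!EFinM -EFinD => -[eqAE] -[{}splitE].
by congr (_%:E); lra.
Qed.

Lemma indep_next_bigcup (F : (set T)^nat) : trivIset setT F ->
  (forall k, indep_next (F k)) -> indep_next (\bigcup_k F k).
Proof.
move=> tF indF; split; first by apply: bigcup_measurable => k _; exact: (indF k).1.
move=> j; rewrite setI_bigcupl !measure_bigcup //=; last 3 first.
- by move=> k _; exact: (indF k).1.
- by move=> k _; apply: measurableI; [exact: (indF k).1 | exact: measurable_preimage_X].
- by move=> a b _ _ [w [[Fa _] [Fb _]]]; apply: tF => //; exists w.
rewrite muleC -nneseriesZl; last by move=> k _; exact: measure_ge0.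
by apply: eq_eseriesr => k _; rewrite (indF k).2 muleC.
Qed.

Lemma dynkin_indep_next : dynkin indep_next.
Proof.
split; [split; first exact: measurableT | exact: indep_next_setC |
  exact: indep_next_bigcup].
by move=> j; rewrite setTI probability_setT mul1e X_law.
Qed.

Lemma filtr_sub_indep_next {A} : filtr X n A -> indep_next A.
Proof.
move=> FA; apply: (lambda_system_subset cylinder_setI_closed
  ((dynkin_lambda_system indep_next).1 dynkin_indep_next) cylinder_sub_indep_next).
  by move=> ? ? ? _.
move: FA; apply: smallest_sub; first exact: smallest_sigma_algebra.
by move=> B /gen_sub_cylinder cB; exact: sub_sigma_algebra.
Qed.

Lemma integral_fun_next (A : set T) (f : nat -> R) : filtr X n A -> (forall j, 0 <= f j) ->
  (\int[P]_(w in A) (f (X n.+1 w))%:E = P A * \sum_(j <oo) (p j * f j)%:E)%E.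
Proof.
move=> FA f_ge0; have [mA indA] := filtr_sub_indep_next FA.
rewrite (ge0_integral_partition_nat _ _ _ _ (X_measurable n.+1) mA); last 2 first.
- exact: measurable_funS measurableT (@subsetT _ _)
    (measurable_fun_Mx_next (fun _ b => (f b)%:E)).
- by move=> w; rewrite lee_fin.
rewrite (probability_fineE _ mA) -nneseriesZl; last first.
  by move=> j _; rewrite lee_fin mulr_ge0 ?p_ge0.
apply: eq_eseriesr => j _; rewrite -probability_fineE //.
transitivity (\int[P]_(w in A `&` X n.+1 @^-1` [set j]) (cst (f j)%:E w))%E.
  by apply: eq_integral => w; rewrite inE => -[_ /= ->].
rewrite integral_cst; last by apply: measurableI => //; exact: measurable_preimage_X.
change ((f j)%:E * P (A `&` X n.+1 @^-1` [set j]) = P A * (p j * f j)%:E)%E.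
by rewrite indA muleCA -EFinM mulrC.
Qed.

Lemma integral_Mx_next (F : nat -> nat -> R) A : filtr X n A -> (forall m j, 0 <= F m j) ->
  (\int[P]_(w in A) (F (Mx X n w) (X n.+1 w))%:E =
   \int[P]_(w in A) \sum_(j <oo) (p j * F (Mx X n w) j)%:E)%E.
Proof.
move=> FA F_ge0; have mA := filtr_measurable FA.
have mMx m : measurable (Mx X n @^-1` [set m]) := filtr_measurable (filtr_Mx_eq m).
have FAm m : filtr X n (A `&` Mx X n @^-1` [set m]) by exact: filtrI FA (filtr_Mx_eq m).
rewrite !(ge0_integral_partition_nat _ _ _ _ mMx mA); last 4 first.
- exact: measurable_funS measurableT (@subsetT _ _)
    (measurable_fun_Mx_next (fun a _ => \sum_(j <oo) (p j * F a j)%:E)%E).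
- by move=> w; apply: nneseries_ge0 => j _ _; rewrite lee_fin mulr_ge0 ?p_ge0.
- exact: measurable_funS measurableT (@subsetT _ _)
    (measurable_fun_Mx_next (fun a b => (F a b)%:E)).
- by move=> w; rewrite lee_fin.
apply: eq_eseriesr => m _.
transitivity (\int[P]_(w in A `&` Mx X n @^-1` [set m]) (F m (X n.+1 w))%:E)%E.
  by apply: eq_integral => w; rewrite inE => -[_ /= ->].
rewrite (integral_fun_next _ (F m) (FAm m) (F_ge0 m)).
transitivity (\int[P]_(w in A `&` Mx X n @^-1` [set m])
    (cst (\sum_(j <oo) (p j * F m j)%:E) w))%E; last first.
  by apply: eq_integral => w; rewrite inE => -[_ /= ->].
rewrite integral_cst; last exact: filtr_measurable (FAm m).
exact: muleC.
Qed.

Lemma xi_sqrE delta w : xi X p delta n.+1 w ^+ 2 = sq_err p delta (Mx X n w) (X n.+1 w).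
Proof. by rewrite /xi /Ind /= MxS theta_maxnB. Qed.

Lemma is_cond_exp_xi_sqr delta (Z : T -> \bar R) :
  (forall w, \sum_(j <oo) (p j * sq_err p delta (Mx X n w) j)%:E = Z w)%E ->
  is_cond_exp P (filtr X n) (fun w => (xi X p delta n.+1 w ^+ 2)%:E) Z.
Proof.
move=> ZE; rewrite -(funext ZE); split => [B _|A FA].
  exact: (filtr_Mx_preimage
    ((fun m => \sum_(j <oo) (p j * sq_err p delta m j)%:E)%E @^-1` B)).
transitivity (\int[P]_(w in A) (sq_err p delta (Mx X n w) (X n.+1 w))%:E)%E.
  by apply: eq_integral => w _; rewrite xi_sqrE.
by rewrite integral_Mx_next // => ? ?; exact: sqr_ge0.
Qed.

End filtration.

Theorem proposition2p2 (R : realType) (d : measure_display) (T : measurableType d)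
  (P : probability T R) (X : nat -> T -> nat) (p : nat -> R) (delta : int)
  (hXmeas : forall n k, measurable (X n @^-1` [set k]))
  (hindep : mutually_independent P X)
  (hdist : forall n k, (1 <= n)%N -> P (X n @^-1` [set k]) = (p k)%:E)
  (hpos : forall k, 0 < p k)
  (k : nat) (hk : (1 <= k)%N) :
  ((delta < 0) ->
     is_cond_exp P (filtr X k.-1)
       (fun w => ((xi X p delta k w) ^+ 2)%:E)
       (fun w => (\sum_((Mx X k.-1 w).+1 <= i <oo)
                    ((s_ p delta i) * (yz p (i%:Z + delta) + yz p (i%:Z + delta - 1)
                                        - yz p (i%:Z - 1)))%:E)%E)) /\
  ((0 < delta) ->
     is_cond_exp P (filtr X k.-1)
       (fun w => ((xi X p delta k w) ^+ 2)%:E)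
       (fun w => ((yz p ((Mx X k.-1 w)%:Z + delta)
                    * (1 - 2 * \sum_(1 <= i < `|delta|%N.+1) s_ p delta (Mx X k.-1 w + i)))%:E
                  + 2%:E * (\sum_((Mx X k.-1 w).+1 <= i <oo)
                              ((s_ p delta i) * (yz p (i%:Z + delta) + pz p (i%:Z + delta) / 2))%:E)
                  - (2 * yz p ((Mx X k.-1 w)%:Z + 2 * delta))%:E)%E)).
Proof.
case: k hk => [//|n] _.
have p_sum1 : (\sum_(j <oo) (p j)%:E = 1)%E := series_p_eq1 _ _ _ hXmeas hdist.
split => delta_sgn; apply: is_cond_exp_xi_sqr => // w.
- by rewrite series_sq_err_neg.
- by rewrite series_sq_err_pos.
Qed.
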